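(* Let $S\in\mathbb{S}^n$ and let $(U,V)\in\mathbb{R}^{n\times n}$ be an invertible matrix with $U\in\mathbb{R}^{n\times d}$, $V\in\mathbb{R}^{n\times(n-d)}$, such that $S=VV^T$ and $\mathbb{S}^n_+\cap S^{\perp}=\{UWU^T:W\in\mathbb{S}^d_+\}$. Let $$X=(U,V)\begin{pmatrix}W&Z\\Z^T&R\end{pmatrix}(U,V)^T$$ with $W\in\mathbb{S}^d_+$, $R\in\mathbb{S}^{n-d}$, $Z\in\mathbb{R}^{d\times(n-d)}$. Then there exist $P\in\mathbb{S}^n_+$ and $\alpha\in\mathbb{R}$ with $X=P+\alpha S$ (i.e. $X\in\mathbb{S}^n_++\operatorname{lin}S$) if and only if $\operatorname{null}W\subseteq\operatorname{null}Z^T$.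
   Context: $\mathbb{S}^n$ denotes real symmetric $n\times n$ matrices with trace inner product, $\mathbb{S}^n_+$ the positive semidefinite cone, $S^{\perp}=\{X\in\mathbb{S}^n:\operatorname{trace}(SX)=0\}$, $\operatorname{lin}S=\{\alpha S:\alpha\in\mathbb{R}\}$. *)

From mathcomp Require Import all_boot all_order all_algebra.
Set Implicit Arguments. Unset Strict Implicit. Unset Printing Implicit Defensive.
Import Order.TTheory GRing.Theory Num.Theory.
Local Open Scope ring_scope.

Definition sym_mx (R : ringType) (n : nat) (A : 'M[R]_n) : Prop := A^T = A.

Definition psd (R : numDomainType) (n : nat) (A : 'M[R]_n) : Prop :=
  sym_mx A /\ forall x : 'cV[R]_n, 0 <= (x^T *m A *m x) 0 0.

Definition null_sub (R : ringType) (m p k : nat)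
  (A : 'M[R]_(m, k)) (B : 'M[R]_(p, k)) : Prop :=
  forall x : 'cV[R]_k, A *m x = 0 -> B *m x = 0.

From mathcomp Require Import all_boot all_order all_algebra.
From mathcomp Require Import ring lra.
Import Order.TTheory GRing.Theory Num.Theory.
Local Open Scope ring_scope.

(* Congruence by the invertible matrix (U, V) reduces the question to the
   block matrix B = [W Z; Z^T R], since S becomes diag(0, I): X lies in
   S^n_+ + lin S iff B - alpha diag(0, I) is psd for some alpha.  If it is,
   testing the form on (t x, Z^T x) with W x = 0 gives a quadratic that is
   affine in t, so Z^T x = 0.  Conversely, null W in null Z^T means Z = W K,
   and B - alpha diag(0, I) is congruent to diag(W, R - K^T W K - alpha I),
   which is psd once alpha is below minus the entrywise l1-norm of
   R - K^T W K. *)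

Lemma null_sub_submx (F : fieldType) {p q k}
    (A : 'M[F]_(p, k)) (B : 'M[F]_(q, k)) :
  null_sub A B -> (B <= A)%MS.
Proof.
move=> AB; rewrite submxE; apply/eqP/matrixP => i j.
have colE r (C : 'M[F]_(r, k)) l :
    (C *m cokermx A) l j = (C *m col j (cokermx A)) l 0.
  by rewrite !mxE; apply: eq_bigr => l' _; rewrite !mxE.
rewrite colE AB ?mxE //; apply/matrixP => a b.
by rewrite (ord1 b) -colE mulmx_coker !mxE.
Qed.

Section RealLemmas.
Context {R : realFieldType}.

Lemma affine_ge0_slope0 (a b : R) : (forall t, 0 <= t * a + b) -> a = 0.
Proof.
move=> ge0; apply/eqP; apply: contraT => a_neq0.
have := ge0 (- (1 + `|b|) / a); rewrite divfK //.
by have := ler_norm b; lra.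
Qed.

Lemma mul_ge_norm_bound (a b c s : R) :
  a ^+ 2 <= s -> b ^+ 2 <= s -> - (`|c| * s) <= a * c * b.
Proof.
move=> ha hb; have [c_ge0|c_lt0] := lerP 0 c.
  by rewrite ger0_norm //; have := mulr_ge0 c_ge0 (_ : 0 <= s + a * b); nra.
rewrite ltr0_norm //.
by have := mulr_ge0 (_ : 0 <= - c) (_ : 0 <= s - a * b); nra.
Qed.

Lemma dotmx_ge0 {n} (y : 'cV[R]_n) : 0 <= (y^T *m y) 0 0.
Proof. by rewrite mxE; apply: sumr_ge0 => i _; rewrite mxE; nra. Qed.

Lemma dotmx_eq0 {n} (y : 'cV[R]_n) : (y^T *m y) 0 0 = 0 -> y = 0.
Proof.
rewrite mxE => sum0; apply/matrixP => i j; rewrite (ord1 j) mxE.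
have terms_ge0 k : true -> 0 <= y^T 0 k * y k 0 by rewrite mxE; nra.
have /eqP := psumr_eq0P terms_ge0 sum0 (i := i) isT.
by rewrite mxE mulf_eq0 orbb => /eqP.
Qed.

Lemma sqr_entry_le_dotmx {n} (y : 'cV[R]_n) k : y k 0 ^+ 2 <= (y^T *m y) 0 0.
Proof.
rewrite mxE (bigD1 k) //= mxE -expr2 lerDl.
by apply: sumr_ge0 => i _; rewrite mxE; nra.
Qed.

Definition mx_abs_sum {m} (M : 'M[R]_m) : R := \sum_j \sum_i `|M i j|.

Lemma quad_form_ge {n} (M : 'M[R]_n) (y : 'cV[R]_n) :
  - (mx_abs_sum M * (y^T *m y) 0 0) <= (y^T *m M *m y) 0 0.
Proof.
have := @sqr_entry_le_dotmx _ y; set s := (y^T *m y) 0 0 => entry_le.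
rewrite /mx_abs_sum mxE mulr_suml -sumrN; apply: ler_sum => j _.
rewrite mxE mulr_suml mulr_suml -sumrN; apply: ler_sum => i _; rewrite mxE.
exact: mul_ge_norm_bound.
Qed.

Lemma psd_congruence {n k} (C : 'M[R]_(n, k)) (A : 'M[R]_n) :
  psd A -> psd (C^T *m A *m C).
Proof.
case=> symA A_ge0; split; first by rewrite /sym_mx !trmx_mul trmxK symA mulmxA.
by move=> x; have := A_ge0 (C *m x); rewrite trmx_mul !mulmxA.
Qed.

Lemma psd_congruence_unit {n} (A : 'M[R]_n) (T : 'M[R]_n) :
  T \in unitmx -> psd (T *m A *m T^T) <-> psd A.
Proof.
move=> T_unit; split=> [psdTA|]; last first.
  by move/(psd_congruence T^T); rewrite trmxK.
have := psd_congruence (invmx T)^T _ psdTA; rewrite trmxK.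
by rewrite !mulmxA mulVmx // mul1mx -mulmxA -trmx_mul mulVmx // trmx1 mulmx1.
Qed.

Lemma psd_add_scalar_abs_sum {n} {M : 'M[R]_n} :
  sym_mx M -> psd (M + (mx_abs_sum M)%:M).
Proof.
move=> symM; split; first by rewrite /sym_mx linearD /= tr_scalar_mx symM.
move=> y; rewrite mulmxDr mulmxDl mul_mx_scalar -scalemxAl.
have := quad_form_ge M y; have := dotmx_ge0 y.
by move: (y^T *m M *m y) (y^T *m y) => A B; rewrite !mxE; lra.
Qed.

Lemma psd_block_diag {d m} {W : 'M[R]_d} {M : 'M[R]_m} :
  psd W -> psd M -> psd (block_mx W 0 0 M).
Proof.
case=> symW W_ge0 [symM M_ge0]; split.
  by rewrite /sym_mx tr_block_mx symW symM !trmx0.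
move=> x; rewrite -[x]vsubmxK tr_col_mx mul_row_block !mulmx0 addr0 add0r.
by rewrite mul_row_col mxE addr_ge0.
Qed.

Lemma psd_block_null_sub {d m} {W : 'M[R]_d} {Z : 'M[R]_(d, m)} {N : 'M[R]_m} :
  sym_mx W -> psd (block_mx W Z Z^T N) -> null_sub W Z^T.
Proof.
move=> symW [_ B_ge0] x Wx; set y := Z^T *m x.
have xW : x^T *m W = 0 by rewrite -symW -trmx_mul Wx trmx0.
have xZ : x^T *m Z = y^T by rewrite trmx_mul trmxK.
suff /affine_ge0_slope0 yy0 : forall t,
    0 <= t * (2 * (y^T *m y) 0 0) + (y^T *m N *m y) 0 0.
  by apply: dotmx_eq0; lra.
move=> t; have := B_ge0 (col_mx (t *: x) y).
have tr_tx : (t *: x)^T = t *: x^T by apply/matrixP=> i j; rewrite !mxE.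
rewrite tr_col_mx tr_tx mul_row_block mul_row_col -!scalemxAl xW xZ.
rewrite scaler0 add0r mulmxDl -scalemxAr -scalemxAl -!mulmxA -/y.
set a := y^T *m y; set b := y^T *m (N *m y).
by rewrite !mxE; lra.
Qed.

Lemma psd_block_shift {d m} {W : 'M[R]_d} {Z : 'M[R]_(d, m)} {N : 'M[R]_m} :
  psd W -> sym_mx N -> null_sub W Z^T ->
  exists alpha : R, psd (block_mx W Z Z^T (N - alpha%:M)).
Proof.
move=> psdW symN /null_sub_submx/submxP[K' ZK']; set K := K'^T.
have symW := psdW.1.
have ZT : Z^T = K^T *m W by rewrite trmxK.
have ZE : Z = W *m K by rewrite -[Z]trmxK ZT trmx_mul symW trmxK.
set M := N - K^T *m W *m K; exists (- mx_abs_sum M).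
have symM : sym_mx M.
  by rewrite /sym_mx /M linearB /= !trmx_mul trmxK symW symN mulmxA.
have := psd_congruence (block_mx 1%:M K 0 1%:M) _
  (psd_block_diag psdW (psd_add_scalar_abs_sum symM)).
rewrite tr_block_mx !trmx1 trmx0 !mulmx_block !mulmx0 !mul0mx !mulmx1 !mul1mx.
have ZTK : Z^T *m K = K^T *m W *m K by rewrite ZT.
rewrite !addr0 !add0r -ZE -ZT ZTK /M raddfN opprK.
by rewrite addrA [X in X + _]addrC subrK.
Qed.

End RealLemmas.

(* Neither the symmetry of S nor the description of the face S^n_+ \cap S^perp
   is needed. *)
Theorem lemma9 (R : rcfType) (d m : nat)
  (S : 'M[R]_(d + m)) (U : 'M[R]_(d + m, d)) (V : 'M[R]_(d + m, m))
  (W : 'M[R]_d) (Z : 'M[R]_(d, m)) (Rm : 'M[R]_m) :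
  sym_mx S ->
  row_mx U V \in unitmx ->
  S = V *m V^T ->
  (forall Y : 'M[R]_(d + m),
     (psd Y /\ \tr (S *m Y) = 0) <->
     (exists W' : 'M[R]_d, psd W' /\ Y = U *m W' *m U^T)) ->
  psd W -> sym_mx Rm ->
  (exists (P : 'M[R]_(d + m)) (alpha : R),
     psd P /\
     row_mx U V *m block_mx W Z Z^T Rm *m (row_mx U V)^T = P + alpha *: S)
  <-> null_sub W Z^T.
Proof.
move=> _ T_unit SE _ psdW symRm; set T := row_mx U V.
pose B a := block_mx W Z Z^T (Rm - a%:M).
pose D : 'M[R]_(d + m) := block_mx 0 0 0 1%:M.
have SD : S = T *m D *m T^T.
  rewrite SE mul_row_block !mulmx0 !mulmx1 !addr0 add0r tr_row_mx mul_row_col.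
  by rewrite mul0mx add0r.
have XE a : T *m block_mx W Z Z^T Rm *m T^T = T *m B a *m T^T + a *: S.
  have -> : block_mx W Z Z^T Rm = B a + a *: D.
    by rewrite scale_block_mx add_block_mx !scaler0 !addr0 scalemx1 subrK.
  by rewrite mulmxDr mulmxDl SD -scalemxAr -scalemxAl.
split=> [[P [a [psdP]]]|/(psd_block_shift psdW symRm)[a psdB]].
  rewrite (XE a) => /addIr PE.
  apply: (psd_block_null_sub psdW.1 (N := Rm - a%:M)).
  by rewrite -(psd_congruence_unit _ _ T_unit) -/(B a) PE.
exists (T *m B a *m T^T), a.
by rewrite -(psd_congruence_unit _ _ T_unit) in psdB.
Qed.
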